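(* Let $0<\underline{s}<\overline{s}<1$, $p\in(0,1)$, $u,v>0$ with $u\ne v$, with $\mathcal{E}_0\neq\emptyset$, and fix $\varepsilon_0>0$ and $n\in\mathbb{N}$. Let $F_n$ be the set of $f\in F^\infty_{(\underline{s},\overline{s})}$ whose stationary set $$S_f=\{c\in C_{\varepsilon_0}: G_f(\lambda,0)=G_f(\lambda,c)=0 \text{ for some }\lambda\in\mathcal{E}_0\cap\mathcal{E}_c\}$$ has Lebesgue measure at least $\frac1n$, and let $\overline{F}_n$ be its closure in $F^\infty_{(\underline{s},\overline{s})}$ (for the $L_\infty$-norm). If $f\in\overline{F}_n$, then there exists $S\subset C_{\varepsilon_0}$ with Lebesgue measure $m(S)\ge\frac1n$ such that for every $c\in S$ the system $G_f(\lambda,0)=G_f(\lambda,c)=0$ has a solution $\lambda\in\overline{\mathcal{E}}_0\cap\overline{\mathcal{E}}_c$.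
   Context: $F^\infty_{(\underline{s},\overline{s})}=\{f\in L_\infty(\underline{s},\overline{s})\cap C^0(\underline{s},\overline{s}): \int_{\underline{s}}^{\overline{s}} f(s)\frac{1-2s}{s}ds=0,\ \int_{\underline{s}}^{\overline{s}} f=1,\ f\ge0,\ f(s)\frac{1-s}{s}\in L_\infty(\underline{s},\overline{s})\}$ with the $L_\infty$-norm topology. For $\lambda>0$, $c\in(-1,u)\cap(-v,1)$: $m(\lambda,c)=\frac{\lambda(1+c)}{\lambda(1+c)+(u-c)}$, $mm(\lambda,c)=\frac{\lambda(1-c)}{\lambda(1-c)+(v+c)}$; $\mathcal{E}_c=\{\lambda>0: m(\lambda,c),mm(\lambda,c)\in(\underline{s},\overline{s})\}$, and $\overline{\mathcal{E}}_c$ denotes its closure in $\mathbb{R}$. $C=\{c\in(-1,u)\cap(-v,1):\mathcal{E}_c\ne\emptyset\}\setminus\{0\}$, $C_{\varepsilon_0}=C\cap(-1+\varepsilon_0,u-\varepsilon_0)\cap(-v+\varepsilon_0,1-\varepsilon_0)$. For $\lambda$ with $m(\lambda,c),mm(\lambda,c)\in[\underline{s},\overline{s}]$, $G_f(\lambda,c)=p\int_{\underline{s}}^{m(\lambda,c)} f(s)\frac{1-2s}{s}ds+(1-p)\int_{mm(\lambda,c)}^{\overline{s}} f(s)\frac{1-2s}{s}ds$. *)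

From HB Require Import structures.
From mathcomp Require Import all_boot all_order all_algebra.
From mathcomp Require Import all_classical all_reals all_analysis.
Set Implicit Arguments. Unset Strict Implicit. Unset Printing Implicit Defensive.
Import Order.TTheory GRing.Theory Num.Theory.
Import numFieldNormedType.Exports.
Local Open Scope classical_set_scope.
Local Open Scope ring_scope.

Section Defs.
Variable R : realType.

Definition mfun (u lam c : R) : R := lam * (1 + c) / (lam * (1 + c) + (u - c)).
Definition mmfun (v lam c : R) : R := lam * (1 - c) / (lam * (1 - c) + (v + c)).

Definition wgt (s : R) : R := (1 - 2 * s) / s.

Definition Eset (sl su u v c : R) : set R :=
  [set lam | 0 < lam /\ sl < mfun u lam c < su /\ sl < mmfun v lam c < su].

Definition Cset (sl su u v : R) : set R :=
  [set c | (-1 < c < u) /\ (- v < c < 1) /\ Eset sl su u v c !=set0 /\ c <> 0].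

Definition Ceps (sl su u v eps0 : R) : set R :=
  [set c | Cset sl su u v c /\ (-1 + eps0 < c < u - eps0)
          /\ (- v + eps0 < c < 1 - eps0)].

Definition Gf (sl su p u v : R) (f : R -> R) (lam c : R) : R :=
  p * Rintegral lebesgue_measure `[sl, mfun u lam c] (fun s => f s * wgt s)
  + (1 - p) * Rintegral lebesgue_measure `[mmfun v lam c, su] (fun s => f s * wgt s).

(* membership in F^infty_{(sl,su)}; f is a (continuous) function on the open
   interval, its values outside (sl,su) are irrelevant *)
Definition Finf (sl su : R) (f : R -> R) : Prop :=
  (exists M : R, forall s, sl < s < su -> `|f s| <= M)
  /\ {within `]sl, su[, continuous f}
  /\ (\int[lebesgue_measure]_(s in `]sl, su[) (f s * wgt s)%:E = 0%:E)%E
  /\ (\int[lebesgue_measure]_(s in `]sl, su[) (f s)%:E = 1%:E)%E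
  /\ (forall s, sl < s < su -> 0 <= f s)
  /\ (exists M : R, forall s, sl < s < su -> `|f s * ((1 - s) / s)| <= M).

Definition Sstat (sl su p u v eps0 : R) (f : R -> R) : set R :=
  [set c | Ceps sl su u v eps0 c /\
     exists lam, Eset sl su u v 0 lam /\ Eset sl su u v c lam /\
       Gf sl su p u v f lam 0 = 0 /\ Gf sl su p u v f lam c = 0].

Definition Fn (sl su p u v eps0 : R) (n : nat) : set (R -> R) :=
  [set f | Finf sl su f /\ measurable (Sstat sl su p u v eps0 f) /\
     ((n%:R)^-1%:E <= lebesgue_measure (Sstat sl su p u v eps0 f))%E].

(* closure of F_n inside F^infty for the L_infty (= sup, f continuous) norm *)
Definition Fnbar (sl su p u v eps0 : R) (n : nat) : set (R -> R) :=
  [set f | Finf sl su f /\ forall e : R, 0 < e ->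
     exists g, Fn sl su p u v eps0 n g /\
       forall s, sl < s < su -> `|f s - g s| <= e].

End Defs.

(** Choose [g_k] in [F_n] with [|f - g_k| <= 1/(k+1)] and let [S] be the
    limit superior of the stationary sets [S_{g_k}].  These sets all lie in
    [(-1, 1)], so continuity of the Lebesgue measure from above gives
    [m(S) >= 1/n].  For [c] in [S] there are infinitely many [k] and common
    roots [lam_k] of [G_{g_k}(., 0)] and [G_{g_k}(., c)] in [E_0] and [E_c];
    since [G] is linear in [f] and the weight [(1-2s)/s] is bounded by [1/sl],
    [G_f(lam_k, 0)] and [G_f(lam_k, c)] are [O(1/k)].  The [lam_k] are bounded
    (they lie in [E_0]), so a subsequence converges to some [lam] in the
    closures of [E_0] and [E_c]; as [m] and [mm] are Lipschitz in [lam] and the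
    integrals are Lipschitz in their endpoints, [G_f(., 0)] and [G_f(., c)]
    vanish at [lam]. *)

From HB Require Import structures.
From mathcomp Require Import all_boot all_order all_algebra.
From mathcomp Require Import all_classical all_reals all_analysis.
From mathcomp Require Import ring lra measurable_realfun.
Import Order.TTheory GRing.Theory Num.Theory.
Import numFieldNormedType.Exports.
Local Open Scope classical_set_scope.
Local Open Scope ring_scope.
Set Implicit Arguments. Unset Strict Implicit. Unset Printing Implicit Defensive.

Notation mu := (@lebesgue_measure _).

Lemma lebesgue_measure_itvoo_lty (R : realType) (x y : R) : (mu `]x, y[ < +oo)%E.
Proof. by rewrite lebesgue_measure_itv/=; case: ifP => _; rewrite ?ltry. Qed.

Section bounded_integral_on_subintervals.
Context {R : realType} (a b M : R) (h : R -> R).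
Hypotheses (mh : measurable_fun `]a, b[ h)
           (hM : forall s, a < s < b -> `|h s| <= M).

Let in_ab x y s : a <= x -> y <= b -> x < s < y -> a < s < b.
Proof. by move=> ax yb /andP[xs sy]; rewrite (le_lt_trans ax xs) (lt_le_trans sy yb). Qed.

Lemma integrable_subitv x y : a <= x -> y <= b -> mu.-integrable `]x, y[ (EFin \o h).
Proof.
move=> ax yb; apply: measurable_bounded_integrable => //.
- exact: lebesgue_measure_itvoo_lty.
- by apply: measurable_funS mh => // s; rewrite /= !in_itv/=; exact: in_ab.
- exists M; split; first exact: num_real.
  move=> M' MM' s; rewrite /= in_itv/= => xsy.
  by rewrite (le_trans (hM (in_ab ax yb xsy))) ?ltW.
Qed.

Lemma Rintegral_itv_split x y z : a <= x -> x <= y -> y <= z -> z <= b ->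
  \int[mu]_(s in `]x, z[) h s =
  \int[mu]_(s in `]x, y[) h s + \int[mu]_(s in `]y, z[) h s.
Proof.
move=> ax xy yz zb; have [->|yz'] := eqVneq y z.
  by rewrite set_itvoo0 Rintegral_set0 addr0.
have ltyz : y < z by rewrite lt_neqAle yz' yz.
rewrite (@Rintegral_itv_bndo_bndc R (BRight x) y h); last first.
  by apply: integrable_subitv => //; lra.
rewrite -(@Rintegral_itvB R h (BRight x) (BLeft z) y) ?bnd_simp //.
- by rewrite addrC subrK.
- exact: integrable_subitv.
Qed.

Lemma norm_Rintegral_itv_le x y : a <= x -> x <= y -> y <= b ->
  `|\int[mu]_(s in `]x, y[) h s| <= M * (y - x).
Proof.
move=> ax xy yb; have ih := integrable_subitv ax yb.
apply: (le_trans (le_normr_Rintegral _ _)) => //.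
have -> : y - x = fine (mu `]x, y[).
  rewrite lebesgue_measure_itv/= lte_fin; case: ltgtP xy => //= -> _.
  by rewrite subrr.
rewrite -Rintegral_cst //; apply: le_Rintegral => //.
- exact: integrable_norm.
- apply: measurable_bounded_integrable => //; first exact: lebesgue_measure_itvoo_lty.
  exists `|M|; split; first exact: num_real.
  by move=> M' MM' s _; rewrite /= (le_trans _ (ltW MM')).
- by move=> s; rewrite /= in_itv/= => /(in_ab ax yb); exact: hM.
Qed.

Lemma Rintegral_ub_lipschitz x y : a <= x <= b -> a <= y <= b ->
  `|\int[mu]_(s in `]a, y[) h s - \int[mu]_(s in `]a, x[) h s| <= M * `|y - x|.
Proof.
wlog xy : x y / x <= y => [W|/andP[ax xb] /andP[ay yb]].
  move=> hx hy; have [xy|/ltW yx] := leP x y; first exact: W.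
  by rewrite distrC (distrC y); apply: W.
rewrite (Rintegral_itv_split (y := x)) // addrC addKr [`|y - x|]ger0_norm ?subr_ge0 //.
exact: norm_Rintegral_itv_le.
Qed.

Lemma Rintegral_lb_lipschitz x y : a <= x <= b -> a <= y <= b ->
  `|\int[mu]_(s in `]x, b[) h s - \int[mu]_(s in `]y, b[) h s| <= M * `|y - x|.
Proof.
wlog xy : x y / x <= y => [W|/andP[ax xb] /andP[ay yb]].
  move=> hx hy; have [xy|/ltW yx] := leP x y; first exact: W.
  by rewrite distrC (distrC y); apply: W.
rewrite (Rintegral_itv_split (y := y)) // addrK [`|y - x|]ger0_norm ?subr_ge0 //.
exact: norm_Rintegral_itv_le.
Qed.

End bounded_integral_on_subintervals.

Lemma wgt_measurable (R : realType) (sl su : R) : 0 < sl ->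
  measurable_fun `]sl, su[ (@wgt R).
Proof.
move=> sl0; apply: open_continuous_measurable_fun; first exact: interval_open.
move=> x; rewrite inE/= in_itv/= => /andP[slx _].
have x0 : x != 0 by rewrite gt_eqF // (lt_trans sl0 slx).
apply: cvgM; last exact: cvgV x0 cvg_id.
by apply: cvgB; [exact: cvg_cst | apply: cvgM; [exact: cvg_cst | exact: cvg_id]].
Qed.

Lemma norm_wgt_le (R : realType) (sl s : R) : 0 < sl <= s -> s <= 1 ->
  `|wgt s| <= sl^-1.
Proof.
move=> /andP[sl0 sls] s1; have s0 : 0 < s by exact: lt_le_trans sls.
rewrite /wgt normrM normfV (gtr0_norm s0) -[sl^-1]mul1r.
have h1 : `|1 - 2 * s| <= 1 by rewrite ler_norml; apply/andP; split; lra.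
by apply: ler_pM; rewrite ?invr_ge0 ?lef_pV2 ?posrE // ltW.
Qed.

Section weighted_density.
Context {R : realType} (sl su : R) (f : R -> R).
Hypotheses (sl0 : 0 < sl) (su1 : su <= 1) (Ff : Finf sl su f).

Let Finf_measurable g : Finf sl su g -> measurable_fun `]sl, su[ g.
Proof. by case=> _ [cg _]; exact: subspace_continuous_measurable_fun. Qed.

Lemma Finf_weighted_measurable : measurable_fun `]sl, su[ (fun s => f s * wgt s).
Proof. by apply: measurable_funM; [exact: Finf_measurable | exact: wgt_measurable]. Qed.

Lemma Finf_weighted_diff_measurable (g : R -> R) : Finf sl su g ->
  measurable_fun `]sl, su[ (fun s => (f s - g s) * wgt s).
Proof.
move=> Fg; apply: measurable_funM; last exact: wgt_measurable.
by apply: measurable_funB; exact: Finf_measurable.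
Qed.

Lemma Finf_weighted_bounded :
  exists2 M : R, 0 <= M & forall s, sl < s < su -> `|f s * wgt s| <= M.
Proof.
case: Ff => -[M fM] _; exists (`|M| / sl); first by rewrite divr_ge0 // ltW.
move=> s /andP[sls ssu]; rewrite normrM.
have fs : `|f s| <= `|M| by apply: le_trans (ler_norm M); apply: fM; rewrite sls.
apply: ler_pM => //.
by apply: norm_wgt_le; [rewrite sl0 ltW | exact: le_trans (ltW ssu) su1].
Qed.

Lemma Finf_weighted_diff_bounded (g : R -> R) (e : R) :
  (forall s, sl < s < su -> `|f s - g s| <= e) ->
  forall s, sl < s < su -> `|(f s - g s) * wgt s| <= e / sl.
Proof.
move=> fge s /andP[sls ssu]; rewrite normrM; apply: ler_pM => //.
- by rewrite fge ?sls.
- by apply: norm_wgt_le; [rewrite sl0 ltW | exact: le_trans (ltW ssu) su1].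
Qed.

End weighted_density.

Definition Gf_domain {R : realType} (sl su u v lam c : R) :=
  sl <= mfun u lam c <= su /\ sl <= mmfun v lam c <= su.

Lemma Eset_Gf_domain {R : realType} (sl su u v c lam : R) :
  Eset sl su u v c lam -> Gf_domain sl su u v lam c.
Proof. by move=> [_ [/andP[? ?] /andP[? ?]]]; rewrite /Gf_domain !ltW. Qed.

Section Gf_theory.
Context {R : realType} (sl su p u v : R).
Hypothesis hp : 0 <= p <= 1.
Local Notation G := (Gf sl su p u v).
Local Notation dom := (Gf_domain sl su u v).

Lemma Gf_itvoo (f : R -> R) (lam c : R) :
  measurable_fun `]sl, su[ (fun s => f s * wgt s) -> dom lam c ->
  G f lam c = p * \int[mu]_(s in `]sl, mfun u lam c[) (f s * wgt s)
              + (1 - p) * \int[mu]_(s in `]mmfun v lam c, su[) (f s * wgt s).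
Proof.
move=> mf [/andP[m1 m2] /andP[mm1 mm2]]; rewrite /Gf /Rintegral.
rewrite (integral_itv_bndoo (x := sl) (y := mfun u lam c)); last first.
  apply/measurable_EFinP; apply: measurable_funS mf => // s.
  by rewrite /= !in_itv/= => /andP[-> ms]; rewrite (lt_le_trans ms m2).
rewrite (integral_itv_bndoo (x := mmfun v lam c) (y := su)) //.
apply/measurable_EFinP; apply: measurable_funS mf => // s.
by rewrite /= !in_itv/= => /andP[ms ->]; rewrite (le_lt_trans mm1 ms).
Qed.

Lemma GfB (f g : R -> R) (Mf Mg lam c : R) :
  measurable_fun `]sl, su[ (fun s => f s * wgt s) ->
  (forall s, sl < s < su -> `|f s * wgt s| <= Mf) ->
  measurable_fun `]sl, su[ (fun s => g s * wgt s) ->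
  (forall s, sl < s < su -> `|g s * wgt s| <= Mg) ->
  dom lam c -> G f lam c - G g lam c = G (fun s => f s - g s) lam c.
Proof.
move=> mf fM mg gM dlc; have [/andP[m1 m2] /andP[mm1 mm2]] := dlc.
have eqw : (fun s => (f s - g s) * wgt s) = (fun s => f s * wgt s - g s * wgt s).
  by apply/funext => s; rewrite mulrBl.
have mfg : measurable_fun `]sl, su[ (fun s => (f s - g s) * wgt s).
  by rewrite eqw; exact: measurable_funB.
rewrite !Gf_itvoo // eqw !RintegralB //; first ring.
all: by first [apply: (integrable_subitv mf fM) | apply: (integrable_subitv mg gM)].
Qed.

Section bounded_weighted_integrand.
Variables (f : R -> R) (M : R).
Hypotheses (M0 : 0 <= M) (mf : measurable_fun `]sl, su[ (fun s => f s * wgt s))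
           (fM : forall s, sl < s < su -> `|f s * wgt s| <= M).

Lemma norm_Gf_le (lam c : R) : dom lam c -> `|G f lam c| <= M * (su - sl).
Proof.
move=> dlc; have [/andP[m1 m2] /andP[mm1 mm2]] := dlc.
have hA := norm_Rintegral_itv_le mf fM (le_refl sl) m1 m2.
have hB := norm_Rintegral_itv_le mf fM mm1 mm2 (le_refl su).
have hA' : `|\int[mu]_(s in `]sl, mfun u lam c[) (f s * wgt s)| <= M * (su - sl).
  by apply: le_trans hA _; apply: ler_wpM2l => //; lra.
have hB' : `|\int[mu]_(s in `]mmfun v lam c, su[) (f s * wgt s)| <= M * (su - sl).
  by apply: le_trans hB _; apply: ler_wpM2l => //; lra.
have [p0 p1] := andP hp; have q0 : 0 <= 1 - p by rewrite subr_ge0.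
rewrite Gf_itvoo //; apply: le_trans (ler_normD _ _) _.
rewrite !normrM (ger0_norm p0) (ger0_norm q0); nra.
Qed.

Lemma Gf_lipschitz (lam x c : R) : dom lam c -> dom x c ->
  `|G f lam c - G f x c| <=
    M * (`|mfun u lam c - mfun u x c| + `|mmfun v lam c - mmfun v x c|).
Proof.
move=> dl dx; have [ml mml] := dl; have [mx mmx] := dx.
have hA := Rintegral_ub_lipschitz mf fM mx ml.
have hB := Rintegral_lb_lipschitz mf fM mml mmx.
rewrite [`|mmfun v x c - _|]distrC in hB.
have dA0 := mulr_ge0 M0 (normr_ge0 (mfun u lam c - mfun u x c)).
have dB0 := mulr_ge0 M0 (normr_ge0 (mmfun v lam c - mmfun v x c)).
rewrite !Gf_itvoo // opprD addrACA -!mulrBr; apply: le_trans (ler_normD _ _) _.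
have [p0 p1] := andP hp; have q0 : 0 <= 1 - p by rewrite subr_ge0.
by rewrite !normrM (ger0_norm p0) (ger0_norm q0) mulrDr; nra.
Qed.

End bounded_weighted_integrand.
End Gf_theory.

Lemma mfun_lipschitz {R : realType} (u c lam x : R) :
  -1 < c < u -> 0 <= lam -> 0 <= x ->
  `|mfun u lam c - mfun u x c| <= (1 + c) / (u - c) * `|lam - x|.
Proof.
move=> /andP[c1 cu] lam0 x0; set a := 1 + c; set b := u - c.
have a0 : 0 < a by rewrite /a; lra.
have b0 : 0 < b by rewrite /b; lra.
have la0 : 0 <= lam * a by rewrite mulr_ge0 // ltW.
have xa0 : 0 <= x * a by rewrite mulr_ge0 // ltW.
have Dl : 0 < lam * a + b by lra.
have Dx : 0 < x * a + b by lra.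
have -> : mfun u lam c - mfun u x c = a * b * (lam - x) / ((lam * a + b) * (x * a + b)).
  by rewrite /mfun -/a -/b; field; rewrite !gt_eqF.
rewrite normrM normfV !normrM (gtr0_norm a0) (gtr0_norm b0) (gtr0_norm Dl).
rewrite (gtr0_norm Dx).
rewrite ler_pdivrMr ?mulr_gt0 //.
have -> : a * b * `|lam - x| = a / b * `|lam - x| * (b * b) by field; rewrite gt_eqF.
by apply: ler_wpM2l; [rewrite mulr_ge0 // divr_ge0 // ltW | nra].
Qed.

Lemma mmfunE {R : realType} (v lam c : R) : mmfun v lam c = mfun v lam (- c).
Proof. by rewrite /mmfun /mfun opprK. Qed.

Lemma mmfun_lipschitz {R : realType} (v c lam x : R) :
  -v < c < 1 -> 0 <= lam -> 0 <= x ->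
  `|mmfun v lam c - mmfun v x c| <= (1 - c) / (v + c) * `|lam - x|.
Proof.
move=> /andP[vc c1] lam0 x0; rewrite !mmfunE -[c in v + c]opprK.
by apply: mfun_lipschitz => //; apply/andP; split; lra.
Qed.

Lemma cvg_lipschitz_comp {R : realFieldType} {V W : normedModType R}
    (phi : V -> W) (L : R) (x : V) (u_ : V ^nat) :
  (forall n, `|phi (u_ n) - phi x| <= L * `|u_ n - x|) ->
  u_ @ \oo --> x -> (phi \o u_) @ \oo --> phi x.
Proof.
move=> phiL /cvgrPdist_le ux; apply/cvgrPdist_le => e e0.
have L1 : 0 < `|L| + 1 by rewrite ltr_wpDl.
apply: filterS (ux _ (divr_gt0 e0 L1)) => n /=; rewrite distrC => hn.
rewrite distrC; apply: le_trans (phiL n) _.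
apply: le_trans (_ : _ <= (`|L| + 1) * `|u_ n - x|) _.
  by apply: ler_wpM2r => //; apply: le_trans (ler_norm L) _; rewrite lerDl.
by rewrite mulrC -ler_pdivlMr.
Qed.

Lemma increasing_seq_geq (sigma : nat -> nat) : increasing_seq sigma ->
  forall n, (n <= sigma n)%N.
Proof.
by move=> si; elim=> // n ih; rewrite (leq_ltn_trans ih) // ltnNge -leEnat si ltnn.
Qed.

Lemma cvg_harmonic_dominated {R : realType} (u_ : R ^nat) (K : R) :
  (forall n, `|u_ n| <= K * harmonic n) -> u_ @ \oo --> 0.
Proof.
move=> uK; have Kh : (fun n => K * harmonic n) @ \oo --> 0.
  by rewrite -(mulr0 K); apply: cvgMl_tmp; exact: cvg_harmonic.
apply/cvgr0Pnorm_lt => e e0; apply: filterS (cvgr0_norm_lt _ Kh _ e0) => n.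
exact: le_lt_trans (le_trans (uK n) (ler_norm _)).
Qed.

Lemma lim_sup_set_measure_ge {d} {T : measurableType d} {R : realType}
    (nu : {measure set T -> \bar R}) (F : (set T) ^nat) (a : \bar R) :
  (forall k, measurable (F k)) -> (nu (\bigcup_k F k) < +oo)%E ->
  (forall k, a <= nu (F k))%E -> (a <= nu (lim_sup_set F))%E.
Proof.
move=> mF Foo aF.
have U0 : \bigcup_(k >= 0) F k = \bigcup_k F k.
  by apply/seteqP; split=> t [k _ Fkt]; exists k.
have cv := lim_sup_set_cvg nu F mF; rewrite U0 in cv; have {}cv := cv Foo.
rewrite -(cvg_lim (@ereal_hausdorff R) cv); apply: lime_ge; first exact: cvgP cv.
apply: nearW => k; apply: le_trans (aF k) _; rewrite le_measure ?inE //.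
- by apply: bigcup_measurable => j _; exact: mF.
- by move=> t Fkt; exists k => /=.
Qed.

Lemma Eset0_bounded {R : realType} (sl su u v lam : R) : 0 < u -> su < 1 ->
  Eset sl su u v 0 lam -> 0 <= lam <= su * u / (1 - su).
Proof.
move=> u0 su1 [lam0 [/andP[_ hm] _]].
rewrite ltW //= ler_pdivlMr; last lra.
move: hm; rewrite /mfun addr0 subr0 mulr1 ltr_pdivrMr; last lra.
nra.
Qed.

Section roots_in_the_limit.
Context {R : realType} (sl su p u v : R) (f : R -> R).
Hypotheses (sl0 : 0 < sl) (su1 : su <= 1) (hp : 0 <= p <= 1) (Ff : Finf sl su f).
Local Notation G := (Gf sl su p u v).

Lemma norm_Gf_approx_le (g : R -> R) (e lam c : R) :
  0 <= e -> Finf sl su g -> (forall s, sl < s < su -> `|f s - g s| <= e) ->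
  Gf_domain sl su u v lam c -> G g lam c = 0 ->
  `|G f lam c| <= e / sl * (su - sl).
Proof.
move=> e0 Fg fge dlc Gg0.
have [Mf _ fM] := Finf_weighted_bounded sl0 su1 Ff.
have [Mg _ gM] := Finf_weighted_bounded sl0 su1 Fg.
have fgM := Finf_weighted_diff_bounded sl0 su1 fge.
have e0' : 0 <= e / sl by rewrite divr_ge0 // ltW.
have mfg := Finf_weighted_diff_measurable sl0 Ff Fg.
have -> : G f lam c = G f lam c - G g lam c by rewrite Gg0 subr0.
rewrite (GfB p (Finf_weighted_measurable sl0 Ff) fM
                (Finf_weighted_measurable sl0 Fg) gM dlc).
exact (norm_Gf_le hp e0' mfg fgM dlc).
Qed.

Lemma Gf_root_of_cvg (c : R) (lam : R ^nat) (x : R) :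
  -1 < c < u -> -v < c < 1 -> (forall n, Eset sl su u v c (lam n)) ->
  lam @ \oo --> x -> (fun n => G f (lam n) c) @ \oo --> 0 ->
  closure (Eset sl su u v c) x /\ G f x c = 0.
Proof.
move=> cu cv Elam lamx G0; split.
  apply: (closed_cvg _ (@closed_closure _ _) _ x lamx).
  by apply: nearW => n; apply: subset_closure.
have lam0 n : 0 <= lam n by case: (Elam n) => /ltW.
have x0 : 0 <= x.
  by apply: (closed_cvg _ (closed_ge (y := 0)) _ x lamx); apply: nearW.
have dom_lam n := Eset_Gf_domain (Elam n).
have in_slsu (w : R ^nat) y :
    (forall n, sl <= w n <= su) -> w @ \oo --> y -> sl <= y <= su.
  move=> wi wy; suff : `[sl, su]%classic y by rewrite /= in_itv.
  apply: (closed_cvg _ (itv_closed (x := sl) (y := su)) _ y wy).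
  by apply: nearW => n; rewrite /= in_itv; exact: wi.
have domx : Gf_domain sl su u v x c.
  split.
  - apply: (in_slsu (fun n => mfun u (lam n) c)); first by move=> n; case: (dom_lam n).
    apply: (cvg_lipschitz_comp (phi := fun l => mfun u l c)) lamx => n.
    exact: mfun_lipschitz.
  - apply: (in_slsu (fun n => mmfun v (lam n) c)); first by move=> n; case: (dom_lam n).
    apply: (cvg_lipschitz_comp (phi := fun l => mmfun v l c)) lamx => n.
    exact: mmfun_lipschitz.
have [M M0 fM] := Finf_weighted_bounded sl0 su1 Ff.
have G_cvg : (fun n => G f (lam n) c) @ \oo --> G f x c.
  apply: (cvg_lipschitz_comp (phi := fun l => G f l c)
           (L := M * ((1 + c) / (u - c) + (1 - c) / (v + c)))) lamx => n.
  have mf := Finf_weighted_measurable sl0 Ff.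
  apply: le_trans (Gf_lipschitz hp M0 mf fM (dom_lam n) domx) _.
  rewrite -mulrA mulrDl; apply: ler_wpM2l => //.
  by apply: lerD; [exact: mfun_lipschitz | exact: mmfun_lipschitz].
exact: cvg_unique G_cvg G0.
Qed.

End roots_in_the_limit.

Section lim_sup_of_stationary_sets.
Context {R : realType} (sl su p u v eps0 : R) (f : R -> R) (g : nat -> R -> R).
Hypotheses (sl0 : 0 < sl) (slsu : sl < su) (su1 : su < 1) (hp : 0 <= p <= 1)
           (Ff : Finf sl su f)
           (fg : forall k, Finf sl su (g k) /\
                   forall s, sl < s < su -> `|f s - g k s| <= harmonic k).
Local Notation G := (Gf sl su p u v f).
Local Notation K := ((su - sl) / sl).

Let K0 : 0 <= K. Proof. by rewrite divr_ge0 ?subr_ge0 // ltW. Qed.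

Lemma lim_sup_Sstat_near_roots (c : R) :
  lim_sup_set (fun k => Sstat sl su p u v eps0 (g k)) c ->
  forall N, exists lam, Eset sl su u v 0 lam /\ Eset sl su u v c lam /\
    `|G lam 0| <= K * harmonic N /\ `|G lam c| <= K * harmonic N.
Proof.
move=> Sc N; have [k /= Nk [_ [lam [E0 [Ec [G0 Gc]]]]]] := Sc N I.
have [Fg fgk] := fg k.
have hk : harmonic k / sl * (su - sl) <= K * harmonic N.
  have -> : harmonic k / sl * (su - sl) = K * harmonic k by ring.
  by apply: ler_wpM2l => //=; rewrite lef_pV2 ?posrE ?ltr0n // ler_nat ltnS.
have su1' := ltW su1; have e0 : 0 <= harmonic k :> R := harmonic_ge0 k.
exists lam; do !split => //; apply: le_trans _ hk.
- exact (norm_Gf_approx_le sl0 su1' hp Ff e0 Fg fgk (Eset_Gf_domain E0) G0).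
- exact (norm_Gf_approx_le sl0 su1' hp Ff e0 Fg fgk (Eset_Gf_domain Ec) Gc).
Qed.

Lemma lim_sup_Sstat_common_root (c : R) : 0 < u -> 0 < v ->
  lim_sup_set (fun k => Sstat sl su p u v eps0 (g k)) c ->
  exists lam, closure (Eset sl su u v 0) lam /\ closure (Eset sl su u v c) lam /\
              G lam 0 = 0 /\ G lam c = 0.
Proof.
move=> u0 v0 Sc; have su1' := ltW su1.
have [_ _ [[[cu [cv _]] _] _]] := Sc 0%N I.
have [lam hlam] := choice (lim_sup_Sstat_near_roots Sc).
have [sigma sigma_incr /cvg_ex[x lamx]] : exists2 sigma : nat -> nat,
    increasing_seq sigma & cvgn (lam \o sigma).
  apply: bolzano_weierstrass; exists (su * u / (1 - su)); split; first exact: num_real.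
  move=> M BM n _ /=; have /andP[l0 lB] := Eset0_bounded u0 su1 (hlam n).1.
  by rewrite ger0_norm // (le_trans lB (ltW BM)).
have sub_cvg0 c' : (forall n, `|G (lam n) c'| <= K * harmonic n) ->
    (fun n => G (lam (sigma n)) c') @ \oo --> 0.
  move=> hb; apply: (cvg_harmonic_dominated (K := K)) => n.
  apply: le_trans (hb _) _; apply: ler_wpM2l => //=.
  by rewrite lef_pV2 ?posrE ?ltr0n // ler_nat ltnS increasing_seq_geq.
have c0u : (-1 : R) < 0 < u by apply/andP; split; lra.
have c0v : - v < 0 < (1 : R) by apply/andP; split; lra.
have [cl0 G0] := Gf_root_of_cvg sl0 su1' hp Ff c0u c0v (fun n => (hlam (sigma n)).1)
  lamx (sub_cvg0 0 (fun n => (hlam n).2.2.1)).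
have [clc Gc] := Gf_root_of_cvg sl0 su1' hp Ff cu cv (fun n => (hlam (sigma n)).2.1)
  lamx (sub_cvg0 c (fun n => (hlam n).2.2.2)).
by exists x.
Qed.

End lim_sup_of_stationary_sets.

Theorem proposition7 (R : realType) (sl su p u v eps0 : R) (n : nat)
  (hsl : 0 < sl) (hslsu : sl < su) (hsu : su < 1)
  (hp0 : 0 < p) (hp1 : p < 1) (hu : 0 < u) (hv : 0 < v) (huv : u != v)
  (hE0 : Eset sl su u v 0 !=set0) (heps : 0 < eps0) (hn : (0 < n)%N)
  (f : R -> R) :
  Fnbar sl su p u v eps0 n f ->
  exists S : set R,
    S `<=` Ceps sl su u v eps0 /\ measurable S /\
    ((n%:R)^-1%:E <= lebesgue_measure S)%E /\
    forall c, S c ->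
      exists lam, closure (Eset sl su u v 0) lam /\
                  closure (Eset sl su u v c) lam /\
                  Gf sl su p u v f lam 0 = 0 /\ Gf sl su p u v f lam c = 0.
Proof.
move=> [Ff approx].
have [g gFn] := choice (fun k => approx _ (harmonic_gt0 k)).
pose S k := Sstat sl su p u v eps0 (g k).
have mS k : measurable (S k) by case: (gFn k) => -[_ []].
have SC k : S k `<=` Ceps sl su u v eps0 by move=> c [].
exists (lim_sup_set S); split; [|split; [|split]].
- by move=> c /(_ 0%N I) [k _ /SC].
- by apply: bigcap_measurable => // k _; apply: bigcup_measurable => j _; exact: mS.
- apply: lim_sup_set_measure_ge => //; last by move=> k; case: (gFn k) => -[_ []].
  apply: le_lt_trans (lebesgue_measure_itvoo_lty (-1) 1); rewrite le_measure ?inE //.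
  + by apply: bigcup_measurable => k _; exact: mS.
  + move=> c [k _ /SC [[/andP[c1 _] [/andP[_ c2] _]] _]].
    by rewrite /= in_itv/= c1 c2.
- move=> c; apply: lim_sup_Sstat_common_root => //; first by rewrite !ltW.
  by move=> k; have [[Fg _] fg] := gFn k.
Qed.
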